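(* Let $S\in\mathcal{B}_A(\mathcal{H})$. Then $$\omega_A^2(S)\le\frac1{\sqrt2}\,\omega_A\big(S^{\sharp_A}S+i\,SS^{\sharp_A}\big).$$
   Context: $\mathcal{H}$ is a complex Hilbert space with inner product $\langle\cdot,\cdot\rangle$, and $A$ is a fixed nonzero positive bounded operator on $\mathcal{H}$. Set $\langle x,y\rangle_A=\langle Ax,y\rangle$ and $\|x\|_A=\|A^{1/2}x\|$. $\mathcal{B}_A(\mathcal{H})$ is the set of bounded operators $T$ for which there exists a bounded $S$ with $\langle Tx,y\rangle_A=\langle x,Sy\rangle_A$ for all $x,y$ (equivalently $\mathcal{R}(T^*A)\subseteq\mathcal{R}(A)$). For $T\in\mathcal{B}_A(\mathcal{H})$, $T^{\sharp_A}=A^\dagger T^*A$ ($A^\dagger$ the Moore–Penrose inverse) is the reduced solution of $AX=T^*A$. $\omega_A(T)=\sup\{|\langle Tx,x\rangle_A|:\|x\|_A=1\}$. *)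

From mathcomp Require Import all_boot all_order all_algebra complex.
From mathcomp Require Import all_classical reals.
Import GRing.Theory Num.Theory.
Set Implicit Arguments. Unset Strict Implicit. Unset Printing Implicit Defensive.
Local Open Scope ring_scope.
Local Open Scope classical_set_scope.

Section Defs.
Variable R : realType.
Variable H : lmodType R[i].
Variable inner : H -> H -> R[i].

Definition is_inner_product : Prop :=
  [/\ (forall (a : R[i]) (x y z : H), inner (a *: x + y) z = a * inner x z + inner y z),
      (forall x y : H, inner y x = Num.conj (inner x y)),
      (forall x : H, 0 <= inner x x) &
      (forall x : H, inner x x = 0 -> x = 0)].

Definition hnorm (x : H) : R := Num.sqrt (complex.Re (inner x x)).

Definition is_complete : Prop :=
  forall u : nat -> H,
    (forall e : R, 0 < e -> exists N : nat, forall m n : nat,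
        (N <= m)%N -> (N <= n)%N -> hnorm (u m - u n) < e) ->
    exists l : H, forall e : R, 0 < e -> exists N : nat, forall n : nat,
        (N <= n)%N -> hnorm (u n - l) < e.

Definition bounded_op (T : H -> H) : Prop :=
  (forall (a : R[i]) (x y : H), T (a *: x + y) = a *: T x + T y) /\
  exists M : R, forall x : H, hnorm (T x) <= M * hnorm x.

Definition is_adjoint (T Ts : H -> H) : Prop :=
  bounded_op Ts /\ forall x y : H, inner (T x) y = inner x (Ts y).

Definition positive_op (A : H -> H) : Prop := forall x : H, 0 <= inner (A x) x.

Variable A : H -> H.

(* <x,y>_A = <Ax,y> and ||x||_A = ||A^{1/2} x|| = sqrt <Ax,x> *)
Definition innerA (x y : H) : R[i] := inner (A x) y.
Definition normA (x : H) : R := Num.sqrt (complex.Re (innerA x x)).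

Definition in_BA (T : H -> H) : Prop :=
  bounded_op T /\ exists S : H -> H,
    bounded_op S /\ forall x y : H, innerA (T x) y = innerA x (S y).

Definition in_closure_range (v : H) : Prop :=
  forall e : R, 0 < e -> exists z : H, hnorm (v - A z) < e.

(* X = T^{#_A} = A^dagger T^* A, i.e. the reduced solution of A X = T^* A:
   the bounded solution X of A X = T^* A with R(X) contained in closure(R(A)). *)
Definition is_A_sharp (T X : H -> H) : Prop :=
  bounded_op X /\
  (exists Ts : H -> H, is_adjoint T Ts /\ forall x : H, A (X x) = Ts (A x)) /\
  (forall x : H, in_closure_range (X x)).

Definition omegaA (T : H -> H) : R :=
  sup [set Normc.normc (innerA (T x) x) | x in [set x : H | normA x = 1]].

End Defs.

(* For x with ||x||_A = 1, Cauchy-Schwarz bounds |<Sx,x>_A|^2 both by ||Sx||_A^2 and,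
   since <Sx,x>_A = <x,S#x>_A, by ||S#x||_A^2.  Meanwhile
   <(S#S + i SS#)x, x>_A = ||Sx||_A^2 + i ||S#x||_A^2 has modulus
   sqrt(||Sx||_A^4 + ||S#x||_A^4) >= sqrt 2 |<Sx,x>_A|^2; take suprema.
   Since [sup] of an unbounded set is 0, the right-hand supremum must be shown finite
   whenever omega_A(S) is: by polarization ||Tx||_A <= 2 omega_A(T) ||x||_A.
   Positivity of A makes <.,.>_A hermitian (again by polarization); only the identity
   A S# = S* A is needed from S#. *)

From mathcomp Require Import all_boot all_order all_algebra complex.
From mathcomp Require Import all_classical reals.
From mathcomp Require Import ring.
Import Order.TTheory GRing.Theory Num.Theory.
Set Implicit Arguments. Unset Strict Implicit. Unset Printing Implicit Defensive.
Local Open Scope ring_scope.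
Local Open Scope classical_set_scope.

Section Sesquilinear.
Variables (R : realType) (H : lmodType R[i]) (f : H -> H -> R[i]).
Hypothesis f_linearPl : forall (a : R[i]) x y z, f (a *: x + y) z = a * f x z + f y z.
Hypothesis f_linearPr : forall (a : R[i]) x y z, f x (a *: y + z) = a^* * f x y + f x z.

Lemma sesq0l z : f 0 z = 0.
Proof.
apply: (addrI (f 0 z)); rewrite addr0.
by have := f_linearPl 1 0 0 z; rewrite scaler0 addr0 mul1r.
Qed.

Lemma sesq0r z : f z 0 = 0.
Proof.
apply: (addrI (f z 0)); rewrite addr0.
by have := f_linearPr 1 z 0 0; rewrite scaler0 addr0 rmorph1 mul1r.
Qed.

Lemma sesqDl x y z : f (x + y) z = f x z + f y z.
Proof. by rewrite -{1}(scale1r x) f_linearPl mul1r. Qed.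

Lemma sesqZl a x z : f (a *: x) z = a * f x z.
Proof. by rewrite -(addr0 (a *: x)) f_linearPl sesq0l addr0. Qed.

Lemma sesqDr x y z : f z (x + y) = f z x + f z y.
Proof. by rewrite -{1}(scale1r x) f_linearPr rmorph1 mul1r. Qed.

Lemma sesqZr a x z : f z (a *: x) = a^* * f z x.
Proof. by rewrite -(addr0 (a *: x)) f_linearPr sesq0r addr0. Qed.

Lemma sesq_expand x y c : f (x + c *: y) (x + c *: y) =
  f x x + c * f y x + c^* * f x y + c * c^* * f y y.
Proof. rewrite !sesqDl !sesqDr !sesqZl !sesqZr; ring. Qed.

Local Notation q c x y := (f (x + c *: y) (x + c *: y)).

Lemma sesq_polarization x y :
  q 1 x y - q (-1) x y + 'i * q 'i x y - 'i * q (- 'i) x y = 4 * f x y.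
Proof.
have sqi : 'i * 'i = -1 :> R[i] by rewrite -expr2 sqrCi.
rewrite !sesq_expand !rmorphN /= conjC1 conjCi.
(* [ring] does not know i^2 = -1, so first isolate the factors 1 +- i^2. *)
transitivity (2 * f y x * (1 + 'i * 'i) + 2 * f x y * (1 - 'i * 'i)); first ring.
by rewrite sqi subrr mulr0 add0r opprK; ring.
Qed.

Lemma sesq_parallelogram x y :
  q 1 x y + q (-1) x y + q 'i x y + q (- 'i) x y = 4 * f x x + 4 * f y y.
Proof.
have sqi : 'i * 'i = -1 :> R[i] by rewrite -expr2 sqrCi.
rewrite !sesq_expand !rmorphN /= conjC1 conjCi.
transitivity (4 * f x x + 2 * f y y * (1 - 'i * 'i)); first ring.
by rewrite sqi opprK; ring.
Qed.

End Sesquilinear.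

Section RealFacts.
Variable R : realType.

Lemma sqr_le_hypot_div_sqrt2 (l a b : R) : l ^+ 2 <= a -> l ^+ 2 <= b ->
  l ^+ 2 <= (Num.sqrt 2)^-1 * Num.sqrt (a ^+ 2 + b ^+ 2).
Proof.
move=> la lb; have l2 : 0 <= l ^+ 2 := sqr_ge0 l.
rewrite ler_pdivlMl ?sqrtr_gt0 ?ltr0n //.
rewrite -[l ^+ 2 in X in X <= _]ger0_norm // -sqrtr_sqr -sqrtrM ?ler0n //.
rewrite ler_sqrt ?addr_ge0 ?sqr_ge0 // mulr_natl mulr2n.
by rewrite lerD // ler_pXn2r ?nnegrE // (le_trans l2).
Qed.

Lemma hypot_le_add (a b : R) : 0 <= a -> 0 <= b -> Num.sqrt (a ^+ 2 + b ^+ 2) <= a + b.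
Proof.
move=> a0 b0; rewrite -[a + b]ger0_norm ?addr_ge0 // -sqrtr_sqr.
rewrite ler_sqrt ?sqr_ge0 // sqrrD lerD2r lerDl.
by rewrite mulrn_wge0 // mulr_ge0.
Qed.

Lemma sup_ge0 (E : set R) : (forall y, E y -> 0 <= y) -> 0 <= sup E.
Proof.
move=> E_ge0; have [[[y Ey] ubE]|] := pselect (has_sup E); last by move/sup_out->.
exact: le_trans (E_ge0 _ Ey) (sup_upper_bound (conj (ex_intro _ y Ey) ubE) Ey).
Qed.

Lemma sup_sqr_le (T : Type) (D : set T) (g h : T -> R) (c : R) : 0 <= c ->
  (forall x, D x -> 0 <= g x) -> (forall x, D x -> 0 <= h x) ->
  (forall x, D x -> g x ^+ 2 <= c * h x) ->
  (has_ubound (g @` D) -> has_ubound (h @` D)) ->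
  sup (g @` D) ^+ 2 <= c * sup (h @` D).
Proof.
move=> c0 g0 h0 gh bdd.
have suph0 : 0 <= c * sup (h @` D).
  by rewrite mulr_ge0 // sup_ge0 // => _ [x Dx <-]; apply: h0.
have [[neg ubg]|nosup] := pselect (has_sup (g @` D)); last first.
  by rewrite sup_out // expr0n.
have sup_gle : sup (g @` D) <= Num.sqrt (c * sup (h @` D)).
  apply: ge_sup => // _ [x Dx <-].
  rewrite -[g x]ger0_norm ?g0 // -sqrtr_sqr ler_sqrt //.
  apply: le_trans (gh _ Dx) _; rewrite ler_wpM2l //.
  by apply: ub_le_sup; [exact: bdd | exists x].
rewrite -(sqr_sqrtr suph0) ler_pXn2r ?nnegrE ?sqrtr_ge0 //.
by rewrite sup_ge0 // => _ [x Dx <-]; apply: g0.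
Qed.

End RealFacts.

Section ComplexFacts.
Variable C : numClosedFieldType.

Lemma exists_pos_sqr_inv (z : C) : 0 < z -> exists2 c : C, 0 < c & c ^+ 2 * z = 1.
Proof.
move=> z_gt0; exists (sqrtC z)^-1; first by rewrite invr_gt0 sqrtC_gt0.
by rewrite exprVn sqrtCK mulVf ?gt_eqF.
Qed.

Lemma ler_norm_polar (a b c d : C) :
  `|a - b + 'i * c - 'i * d| <= `|a| + `|b| + `|c| + `|d|.
Proof.
apply: le_trans (ler_normB _ _) _; rewrite normrM normCi mul1r lerD2r.
apply: le_trans (ler_normD _ _) _; rewrite normrM normCi mul1r lerD2r.
exact: ler_normB.
Qed.

End ComplexFacts.

Section ComplexNorm.
Variable R : rcfType.

Lemma normC_normc (z : R[i]) : `|z| = ((Normc.normc z)%:C)%C.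
Proof. by case: z. Qed.

Lemma normc_ge0 (z : R[i]) : 0 <= Normc.normc z.
Proof. by case: z => a b; apply: sqrtr_ge0. Qed.

Lemma normc_complex (a b : R) :
  Normc.normc ((a%:C)%C + 'i * (b%:C)%C) = Num.sqrt (a ^+ 2 + b ^+ 2).
Proof. by simpc. Qed.

End ComplexNorm.

(* [omegaA inner A] unfolds to [numrad (innerA inner A)]. *)
Definition numrad (R : realType) (H : lmodType R[i]) (f : H -> H -> R[i]) (T : H -> H) :=
  sup [set Normc.normc (f (T x) x) | x in [set x | Num.sqrt (complex.Re (f x x)) = 1]].

Section HermitianForm.
Variables (R : realType) (H : lmodType R[i]) (f : H -> H -> R[i]).
Hypothesis f_linearPl : forall (a : R[i]) x y z, f (a *: x + y) z = a * f x z + f y z.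
Hypothesis f_conj : forall x y, f y x = (f x y)^*.
Hypothesis f_ge0 : forall x, 0 <= f x x.

Lemma herm_linearPr (a : R[i]) x y z : f x (a *: y + z) = a^* * f x y + f x z.
Proof. by rewrite f_conj f_linearPl rmorphD rmorphM /= -!f_conj. Qed.

Local Notation expand := (sesq_expand f_linearPl herm_linearPr).

Lemma herm_cauchy_schwarz x u : f x x = 1 -> `|f u x| ^+ 2 <= f u u.
Proof.
move=> x1; set l := f u x.
have := f_ge0 (u + (- l) *: x); rewrite expand x1 mulr1 -/l (f_conj u x) -/l.
rewrite normCK rmorphN /=.
have -> : f u u + - l * l^* + - l^* * l + - l * - l^* = f u u - l * l^* by ring.
by rewrite subr_ge0.
Qed.

Lemma herm_null u v : f v v = 0 -> f u v = 0.
Proof.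
move=> v0; set l := f u v; apply/eqP/contraT => l_neq0.
have ll_gt0 : 0 < l * l^* by rewrite -normCK exprn_gt0 // normr_gt0.
pose k := (f u u + 1) / (l * l^*).
have k_real : k^* = k.
  by rewrite conj_Creal // rpredM ?rpredV ?rpredD ?rpred1 ?ger0_real ?f_ge0 ?ltW.
have := f_ge0 (u + (- (k * l)) *: v).
rewrite expand v0 mulr0 addr0 -/l (f_conj u v) -/l rmorphN rmorphM /= k_real.
have -> : f u u + - (k * l) * l^* + - (k * l^*) * l = f u u - 2 * (k * (l * l^*)).
  by ring.
rewrite divfK ?gt_eqF //.
have -> : f u u - 2 * (f u u + 1) = - (f u u + 2) by ring.
by rewrite oppr_ge0 lt_geF // ltr_wpDl ?f_ge0 ?ltr0n.
Qed.

Local Notation fZl := (sesqZl f_linearPl).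
Local Notation fZr := (sesqZr herm_linearPr).

Lemma hermZ_real c u v : c \is Num.real -> f (c *: u) (c *: v) = c ^+ 2 * f u v.
Proof. by move=> c_real; rewrite fZl fZr conj_Creal // mulrA expr2. Qed.

Section Operator.
Variable T : H -> H.
Hypothesis T_linearP : forall (a : R[i]) x y, T (a *: x + y) = a *: T x + T y.

Let fT_linearPl (a : R[i]) x y z : f (T (a *: x + y)) z = a * f (T x) z + f (T y) z.
Proof. by rewrite T_linearP f_linearPl. Qed.

Let fTZl a x z : f (T (a *: x)) z = a * f (T x) z.
Proof. exact: (sesqZl (f := fun u v => f (T u) v) fT_linearPl). Qed.

Lemma numrad_homog (M : R[i]) : (forall x, f x x = 1 -> `|f (T x) x| <= M) ->
  forall w, `|f (T w) w| <= M * f w w.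
Proof.
move=> bdd w; have [w0|w_neq0] := eqVneq (f w w) 0.
  by rewrite w0 mulr0 herm_null // normr0.
have [c c_gt0 cw] : exists2 c, 0 < c & c ^+ 2 * f w w = 1.
  by apply: exists_pos_sqr_inv; rewrite lt_def w_neq0 f_ge0.
have := bdd (c *: w); rewrite hermZ_real ?gtr0_real // cw => /(_ erefl).
rewrite fTZl fZr conj_Creal ?gtr0_real // mulrA -expr2 normrM.
rewrite ger0_norm ?exprn_ge0 ?(ltW c_gt0) // => le_M.
by rewrite -[X in X <= _]mul1r -cw mulrAC mulrC [M * _]mulrC ler_wpM2l ?f_ge0.
Qed.

Lemma numrad_polarization_bound (M : R[i]) :
  (forall w, `|f (T w) w| <= M * f w w) ->
  forall x y, 4 * `|f (T x) y| <= M * (4 * f x x + 4 * f y y).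
Proof.
move=> bdd x y.
rewrite -(sesq_parallelogram f_linearPl herm_linearPr) -[4]ger0_norm ?ler0n //.
rewrite -normrM -(sesq_polarization (f := fun u v => f (T u) v) fT_linearPl).
  by apply: le_trans (ler_norm_polar _ _ _ _) _; rewrite !mulrDr !lerD ?bdd.
by move=> a u v w; rewrite herm_linearPr.
Qed.

Lemma herm_op_norm_bound (M : R[i]) : (forall w, `|f (T w) w| <= M * f w w) ->
  forall x, f x x = 1 -> f (T x) (T x) <= 4 * M ^+ 2.
Proof.
move=> bdd x x1.
have M_ge0 : 0 <= M by have := bdd x; rewrite x1 mulr1; apply: le_trans.
have [Tx0|Tx_neq0] := eqVneq (f (T x) (T x)) 0.
  by rewrite Tx0 mulr_ge0 ?exprn_ge0.
have [c c_gt0 cTx] : exists2 c, 0 < c & c ^+ 2 * f (T x) (T x) = 1.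
  by apply: exists_pos_sqr_inv; rewrite lt_def Tx_neq0 f_ge0.
have c2_neq0 : c ^+ 2 != 0 by rewrite expf_neq0 // gt_eqF.
have tE : f (T x) (T x) = (c ^+ 2)^-1 by apply: (mulfI c2_neq0); rewrite cTx mulfV.
have := numrad_polarization_bound bdd x (c *: T x).
rewrite hermZ_real ?gtr0_real // cTx x1 fZr conj_Creal ?gtr0_real // tE.
have -> : c * (c ^+ 2)^-1 = c^-1 by rewrite expr2 invfM mulrA mulfV ?gt_eqF ?mul1r.
rewrite ger0_norm ?invr_ge0 ?(ltW c_gt0) //.
have -> : M * (4 * 1 + 4 * 1) = 4 * (2 * M) by ring.
rewrite ler_pM2l ?ltr0n // => le_2M.
have -> : 4 * M ^+ 2 = (2 * M) ^+ 2 by ring.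
by rewrite -exprVn ler_pXn2r ?nnegrE ?invr_ge0 ?mulr_ge0 ?(ltW c_gt0).
Qed.

End Operator.

Lemma herm_ReE x : ((complex.Re (f x x))%:C)%C = f x x.
Proof. exact/RRe_real/ger0_real/f_ge0. Qed.

Lemma herm_Re_ge0 x : 0 <= complex.Re (f x x).
Proof. by rewrite -ler0c herm_ReE. Qed.

Lemma unit_sphereE :
  [set x | Num.sqrt (complex.Re (f x x)) = 1] = [set x | f x x = 1].
Proof.
apply/seteqP; split=> x /= x1; last by rewrite x1 sqrtr1.
by rewrite -herm_ReE -(sqr_sqrtr (herm_Re_ge0 x)) x1 expr1n.
Qed.

Section Adjoint.
Variables S Ss : H -> H.
Hypothesis S_linearP : forall (a : R[i]) x y, S (a *: x + y) = a *: S x + S y.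
Hypothesis Ss_linearP : forall (a : R[i]) x y, Ss (a *: x + y) = a *: Ss x + Ss y.
Hypothesis adjoint : forall y z, f (Ss y) z = f y (S z).

Local Notation mix := (fun x => Ss (S x) + 'i *: S (Ss x)).

Lemma adjoint_mix_diag x :
  f (mix x) x = f (S x) (S x) + 'i * f (Ss x) (Ss x).
Proof.
rewrite (sesqDl f_linearPl) fZl adjoint (f_conj x) -(adjoint x).
by rewrite conj_Creal // ger0_real.
Qed.

Lemma adjoint_numrad_homog (M : R[i]) : (forall w, `|f (S w) w| <= M * f w w) ->
  forall w, `|f (Ss w) w| <= M * f w w.
Proof. by move=> bdd w; rewrite adjoint (f_conj (S w)) norm_conjC. Qed.

Lemma adjoint_cauchy_schwarz x : f x x = 1 -> `|f (S x) x| ^+ 2 <= f (Ss x) (Ss x).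
Proof.
by move=> x1; rewrite -norm_conjC -f_conj -adjoint herm_cauchy_schwarz.
Qed.

Lemma numrad_adjoint_mix_pointwise x : f x x = 1 ->
  Normc.normc (f (S x) x) ^+ 2 <= (Num.sqrt 2)^-1 * Normc.normc (f (mix x) x).
Proof.
move=> x1; rewrite adjoint_mix_diag -(herm_ReE (S x)) -(herm_ReE (Ss x)) normc_complex.
apply: sqr_le_hypot_div_sqrt2; rewrite -lecR rmorphXn /= -normC_normc herm_ReE.
  exact: herm_cauchy_schwarz.
exact: adjoint_cauchy_schwarz.
Qed.

Lemma numrad_adjoint_mix_bounded (M : R) :
  (forall x, f x x = 1 -> Normc.normc (f (S x) x) <= M) ->
  forall x, f x x = 1 -> Normc.normc (f (mix x) x) <= 8 * M ^+ 2.
Proof.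
move=> bdd x x1.
have homS : forall w, `|f (S w) w| <= (M%:C)%C * f w w.
  by apply: numrad_homog => // y y1; rewrite normC_normc lecR bdd.
have homSs := adjoint_numrad_homog homS.
rewrite adjoint_mix_diag -(herm_ReE (S x)) -(herm_ReE (Ss x)) normc_complex.
apply: le_trans (hypot_le_add (herm_Re_ge0 _) (herm_Re_ge0 _)) _.
have -> : 8 * M ^+ 2 = 4 * M ^+ 2 + 4 * M ^+ 2 by ring.
have four : (4%:C)%C = 4 :> R[i] by rewrite (rmorph_nat (real_complex R)).
rewrite -lecR !rmorphD !rmorphM /= -!expr2 (herm_ReE (S x)) (herm_ReE (Ss x)) four.
by rewrite lerD // herm_op_norm_bound.
Qed.

Theorem numrad_adjoint_mix :
  numrad f S ^+ 2 <= (Num.sqrt 2)^-1 * numrad f mix.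
Proof.
rewrite /numrad unit_sphereE; apply: sup_sqr_le.
- by rewrite invr_ge0 sqrtr_ge0.
- by move=> x _; apply: normc_ge0.
- by move=> x _; apply: normc_ge0.
- exact: numrad_adjoint_mix_pointwise.
move=> [M ubM]; exists (8 * M ^+ 2) => _ [x x1 <-].
by apply: numrad_adjoint_mix_bounded x1 => y y1; apply: ubM; exists y.
Qed.

End Adjoint.
End HermitianForm.

Section PositiveOperator.
Variables (R : realType) (H : lmodType R[i]) (inner : H -> H -> R[i]).
Hypothesis inner_linearPl :
  forall (a : R[i]) x y z, inner (a *: x + y) z = a * inner x z + inner y z.
Hypothesis inner_conj : forall x y, inner y x = (inner x y)^*.
Variable A : H -> H.
Hypothesis A_linearP : forall (a : R[i]) x y, A (a *: x + y) = a *: A x + A y.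
Hypothesis A_ge0 : forall x, 0 <= inner (A x) x.

Lemma positive_op_selfadjoint x y : inner (A x) y = inner x (A y).
Proof.
have inner_linearPr := herm_linearPr inner_linearPl inner_conj.
have AL_linearPl (a : R[i]) u v w :
    inner (A (a *: u + v)) w = a * inner (A u) w + inner (A v) w.
  by rewrite A_linearP inner_linearPl.
have AR_linearPr (a : R[i]) u v w :
    inner u (A (a *: v + w)) = a^* * inner u (A v) + inner u (A w).
  by rewrite A_linearP inner_linearPr.
have diag z : inner (A z) z = inner z (A z).
  by rewrite [RHS]inner_conj conj_Creal // ger0_real.
have := sesq_polarization (f := fun u v => inner (A u) v) AL_linearPl
  (fun a u => inner_linearPr a (A u)) x y.
rewrite /= !diag (sesq_polarization (f := fun u v => inner u (A v))
  (fun a u v w => inner_linearPl a u v (A w)) AR_linearPr x y).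
by move/mulfI => -> //; rewrite pnatr_eq0.
Qed.

Lemma innerA_linearPl (a : R[i]) x y z :
  innerA inner A (a *: x + y) z = a * innerA inner A x z + innerA inner A y z.
Proof. by rewrite /innerA A_linearP inner_linearPl. Qed.

Lemma innerA_conj x y : innerA inner A y x = (innerA inner A x y)^*.
Proof. by rewrite /innerA inner_conj positive_op_selfadjoint. Qed.

End PositiveOperator.

Theorem corollary3p14 (R : realType) (H : lmodType R[i]) (inner : H -> H -> R[i])
    (hinner : is_inner_product inner) (hcomplete : is_complete inner)
    (A : H -> H) (hAb : bounded_op inner A) (hApos : positive_op inner A)
    (hAnz : exists x : H, A x != 0)
    (S : H -> H) (hS : in_BA inner A S)
    (Ssharp : H -> H) (hSsharp : is_A_sharp inner A S Ssharp) :
  omegaA inner A S ^+ 2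
    <= (Num.sqrt (2 : R))^-1 *
       omegaA inner A (fun x => Ssharp (S x) + 'i%C *: S (Ssharp x)).
Proof.
case: hinner => inner_linearPl inner_conj _ _.
case: hAb => A_linearP _.
case: hS => [[S_linearP _] _].
case: hSsharp => [[Ssharp_linearP _] [[Sadj [[_ S_Sadj] A_Ssharp]] _]].
have Ssharp_adjoint y z : innerA inner A (Ssharp y) z = innerA inner A y (S z).
  by rewrite /innerA A_Ssharp inner_conj -S_Sadj -inner_conj.
exact: (numrad_adjoint_mix (innerA_linearPl inner_linearPl A_linearP)
  (innerA_conj inner_linearPl inner_conj A_linearP hApos) hApos
  S_linearP Ssharp_linearP Ssharp_adjoint).
Qed.
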